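(* Let $\Psi=(X,A,q,g)$ be a standard MDP with $X$ a compact subset of a simplex $\Delta(K)$ ($K$ finite), satisfying for all $x,y\in X$, $a\in A$, $f\in D_1$ and $\alpha,\beta\ge0$: - $|\alpha f(q(x,a))-\beta f(q(y,a))|\le\|\alpha x-\beta y\|_1$, and - $|\alpha g(x,a)-\beta g(y,a)|\le\|\alpha x-\beta y\|_1$. Let $Z=\Delta_f(X)\times[0,1]$ with metric $d((u,y),(u',y'))=\max(d_*(u,u'),|y-y'|)$. Then: 1. $\hat F$ is affine: $\hat F(\lambda z+(1-\lambda)z')=\lambda\hat F(z)+(1-\lambda)\hat F(z')$ for $z,z'\in Z$ and $\lambda\in[0,1]$ (Minkowski combination on the right). 2. $\hat F$ is non expansive: for all $z,z'\in Z$ and $w\in\hat F(z)$ there exists $w'\in\hat F(z')$ with $d(w,w')\le d(z,z')$.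
   Context: $q:X\times A\to\Delta_f(X)$ and $g:X\times A\to[0,1]$, extended linearly in the action to $\Delta_f(A)$. $D_1=\{f\in\mathcal C(\Delta(K)):\ \forall x,y,\ \forall a,b\ge0,\ af(x)-bf(y)\le\|ax-by\|_1\}$, with $f$ extended linearly to finitely supported probabilities, and $d_*(u,v)=\sup_{f\in D_1}\big(f(u)-f(v)\big)$. For $(u,y)\in Z$, $$\hat F(u,y)=\Big\{\Big(\sum_xu(x)q(x,\sigma(x)),\ \sum_xu(x)g(x,\sigma(x))\Big):\ \sigma:X\to\Delta_f(A)\Big\}.$$ *)

From Stdlib Require Import Reals Lra List Classical ClassicalEpsilon FunctionalExtensionality.
Open Scope R_scope.
Set Implicit Arguments.

(* K = {0,...,n-1}; a point of R^K is a function nat -> R (coordinates >= n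
   are required to vanish on the simplex, so that points are canonical). *)
Definition point := nat -> R.

Definition sumK (n : nat) (h : nat -> R) : R :=
  fold_right (fun i acc => h i + acc) 0 (seq 0 n).

Definition norm1 (n : nat) (x : point) : R := sumK n (fun i => Rabs (x i)).

Definition simplex (n : nat) (x : point) : Prop :=
  (forall i, (i < n)%nat -> 0 <= x i) /\
  (forall i, (n <= i)%nat -> x i = 0) /\
  sumK n x = 1.

Definition lincomb (a : R) (x : point) (b : R) (y : point) : point :=
  fun i => a * x i - b * y i.

Definition compact1 (n : nat) (X : point -> Prop) : Prop :=
  forall u : nat -> point, (forall k, X (u k)) ->
  exists (phi : nat -> nat) (x : point),
    (forall k, (phi k < phi (S k))%nat) /\ X x /\
    forall eps, 0 < eps -> exists N, forall k, (N <= k)%nat ->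
      norm1 n (lincomb 1 (u (phi k)) 1 x) < eps.

Definition fin_supp (T : Type) (u : T -> R) (s : list T) : Prop :=
  NoDup s /\ forall x, u x <> 0 -> In x s.

(* fsum u h = sum_{x in supp u} u(x) h(x)   (0 if support is infinite) *)
Definition fsum (T : Type) (u : T -> R) (h : T -> R) : R :=
  match excluded_middle_informative (exists s, fin_supp u s) with
  | left H =>
      fold_right (fun x acc => u x * h x + acc) 0
        (proj1_sig (constructive_indefinite_description _ H))
  | right _ => 0
  end.

Definition distf (T : Type) (S : T -> Prop) (u : T -> R) : Prop :=
  (forall x, 0 <= u x) /\ (forall x, u x <> 0 -> S x) /\
  (exists s, fin_supp u s) /\ fsum u (fun _ => 1) = 1.

Definition cont_simplex (n : nat) (f : point -> R) : Prop :=
  forall x, simplex n x -> forall eps, 0 < eps -> exists delta, 0 < delta /\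
    forall y, simplex n y -> norm1 n (lincomb 1 x 1 y) < delta ->
      Rabs (f x - f y) < eps.

Definition D1 (n : nat) (f : point -> R) : Prop :=
  cont_simplex n f /\
  forall x y, simplex n x -> simplex n y -> forall a b, 0 <= a -> 0 <= b ->
    a * f x - b * f y <= norm1 n (lincomb a x b y).

Definition dstar_set (n : nat) (u v : point -> R) (t : R) : Prop :=
  exists f, D1 n f /\ t = fsum u f - fsum v f.

Definition dstar (n : nat) (u v : point -> R) : R :=
  match excluded_middle_informative
          (bound (dstar_set n u v) /\ exists t, dstar_set n u v t) with
  | left H => proj1_sig (completeness _ (proj1 H) (proj2 H))
  | right _ => 0
  end.

Definition Zelt := ((point -> R) * R)%type.

Definition inZ (X : point -> Prop) (z : Zelt) : Prop :=
  distf X (fst z) /\ 0 <= snd z <= 1.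

Definition dZ (n : nat) (z z' : Zelt) : R :=
  Rmax (dstar n (fst z) (fst z')) (Rabs (snd z - snd z')).

Definition combZ (l : R) (z z' : Zelt) : Zelt :=
  (fun x => l * fst z x + (1 - l) * fst z' x, l * snd z + (1 - l) * snd z').

Definition qext (A : Type) (q : point -> A -> point -> R) (x : point) (s : A -> R)
  : point -> R := fun x' => fsum s (fun a => q x a x').
Definition gext (A : Type) (g : point -> A -> R) (x : point) (s : A -> R) : R :=
  fsum s (fun a => g x a).

Definition Fhat (A : Type) (X : point -> Prop) (q : point -> A -> point -> R)
  (g : point -> A -> R) (z w : Zelt) : Prop :=
  exists sigma : point -> A -> R,
    (forall x, X x -> distf (fun _ : A => True) (sigma x)) /\
    w = ((fun x' => fsum (fst z) (fun x => qext q x (sigma x) x')),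
         fsum (fst z) (fun x => gext g x (sigma x))).

From Stdlib Require Import Reals Lra Lia List Classical ClassicalEpsilon FunctionalExtensionality Permutation.
Import ListNotations.
Open Scope R_scope.

(* For a fixed policy sigma the image of (u, y) is linear
   in u (Fimage_comb), which gives one inclusion.  Conversely, policies s1 and
   s2 used at z and z' are merged state by state, playing s_i at x with
   probability proportional to the mass it contributes to the mixture
   (merged_policy).

   The key fact is a duality theorem for d_*
   (coupling_exists): distributions u, v on states admit a weighted coupling
   (gamma, gamma') with marginals u and v and cost
   sum_{x,y} ||gamma(x,y) x - gamma'(x,y) y||_1 <= d_*(u, v).  The coupling
   problem is a finite linear program; if it were infeasible, Farkas' lemma
   (proved by Fourier-Motzkin elimination) would give a dual solution, and the
   max-min function Phi built from it lies in D_1 and contradicts the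
   definition of d_* (weak_duality).  Transporting the policy along the
   coupling (transported_policy), the Lipschitz hypotheses on q and g bound
   both components of the distance by d_*(u, v) (transport_bound). *)

Definition lsum {T} (l : list T) (h : T -> R) : R :=
  fold_right (fun i acc => h i + acc) 0 l.

Lemma lsum_cons {T} (a : T) l h : lsum (a :: l) h = h a + lsum l h.
Proof. reflexivity. Qed.

Lemma lsum_nil {T} (h : T -> R) : lsum [] h = 0.
Proof. reflexivity. Qed.

Lemma lsum_app {T} (l1 l2 : list T) h : lsum (l1 ++ l2) h = lsum l1 h + lsum l2 h.
Proof.
  induction l1 as [|a l1 IH]; simpl app; rewrite ?lsum_cons, ?lsum_nil; [ring|].
  rewrite IH; ring.
Qed.

Lemma lsum_map {T U} (f : T -> U) l h : lsum (map f l) h = lsum l (fun x => h (f x)).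
Proof.
  induction l as [|a l IH]; simpl map; rewrite ?lsum_cons, ?lsum_nil; [ring|].
  rewrite IH; ring.
Qed.

Lemma lsum_flat_map {T U} (F : T -> list U) l h :
  lsum (flat_map F l) h = lsum l (fun x => lsum (F x) h).
Proof.
  induction l as [|a l IH]; simpl flat_map; rewrite ?lsum_cons, ?lsum_nil; [ring|].
  rewrite lsum_app, IH; ring.
Qed.

Lemma lsum_ext {T} l (h1 h2 : T -> R) :
  (forall x, In x l -> h1 x = h2 x) -> lsum l h1 = lsum l h2.
Proof.
  induction l as [|a l IH]; intros H; rewrite ?lsum_cons, ?lsum_nil; [ring|].
  rewrite (H a (or_introl eq_refl)), IH by (intros; apply H; right; auto). ring.
Qed.

Lemma lsum_plus {T} l (h1 h2 : T -> R) :
  lsum l (fun x => h1 x + h2 x) = lsum l h1 + lsum l h2.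
Proof. induction l as [|a l IH]; rewrite ?lsum_cons, ?lsum_nil; [ring|]. rewrite IH; ring. Qed.

Lemma lsum_minus {T} l (h1 h2 : T -> R) :
  lsum l (fun x => h1 x - h2 x) = lsum l h1 - lsum l h2.
Proof. induction l as [|a l IH]; rewrite ?lsum_cons, ?lsum_nil; [ring|]. rewrite IH; ring. Qed.

Lemma lsum_opp {T} l (h : T -> R) : lsum l (fun x => - h x) = - lsum l h.
Proof. induction l as [|a l IH]; rewrite ?lsum_cons, ?lsum_nil; [ring|]. rewrite IH; ring. Qed.

Lemma lsum_scal {T} l c (h : T -> R) : lsum l (fun x => c * h x) = c * lsum l h.
Proof. induction l as [|a l IH]; rewrite ?lsum_cons, ?lsum_nil; [ring|]. rewrite IH; ring. Qed.

Lemma lsum_scal_r {T} l c (h : T -> R) : lsum l (fun x => h x * c) = lsum l h * c.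
Proof. induction l as [|a l IH]; rewrite ?lsum_cons, ?lsum_nil; [ring|]. rewrite IH; ring. Qed.

Lemma lsum_le {T} l (h1 h2 : T -> R) :
  (forall x, In x l -> h1 x <= h2 x) -> lsum l h1 <= lsum l h2.
Proof.
  induction l as [|a l IH]; intros H; rewrite ?lsum_cons, ?lsum_nil; [lra|].
  apply Rplus_le_compat; [apply H; left; auto | apply IH; intros; apply H; right; auto].
Qed.

Lemma lsum_zero {T} l (h : T -> R) : (forall x, In x l -> h x = 0) -> lsum l h = 0.
Proof.
  induction l as [|a l IH]; intros H; rewrite ?lsum_cons, ?lsum_nil; [ring|].
  rewrite (H a (or_introl eq_refl)), IH by (intros; apply H; right; auto). ring.
Qed.

Lemma lsum_nonneg {T} l (h : T -> R) : (forall x, In x l -> 0 <= h x) -> 0 <= lsum l h.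
Proof. intros H. rewrite <- (lsum_zero l (fun _ => 0)) by auto. apply lsum_le; auto. Qed.

Lemma lsum_neg {T} l (h : T -> R) : (forall x, In x l -> h x <= 0) ->
  (exists x, In x l /\ h x < 0) -> lsum l h < 0.
Proof.
  intros H [x [Hx Hneg]]. induction l as [|a l IH]; [destruct Hx|].
  rewrite lsum_cons.
  assert (Hrest : lsum l h <= 0).
  { rewrite <- (lsum_zero l (fun _ => 0)) by auto. apply lsum_le; intros; apply H; right; auto. }
  assert (Ha : h a <= 0) by (apply H; left; auto).
  destruct Hx as [<-|Hx]; [lra|].
  assert (lsum l h < 0) by (apply IH; auto; intros; apply H; right; auto). lra.
Qed.

Lemma lsum_abs {T} l (h : T -> R) : Rabs (lsum l h) <= lsum l (fun x => Rabs (h x)).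
Proof.
  induction l as [|a l IH]; rewrite ?lsum_cons, ?lsum_nil; [rewrite Rabs_R0; lra|].
  eapply Rle_trans; [apply Rabs_triang | lra].
Qed.

Lemma lsum_swap {T U} (l1 : list T) (l2 : list U) h :
  lsum l1 (fun a => lsum l2 (fun b => h a b)) = lsum l2 (fun b => lsum l1 (fun a => h a b)).
Proof.
  induction l1 as [|a l1 IH]; rewrite ?lsum_cons, ?lsum_nil.
  - symmetry; apply lsum_zero; reflexivity.
  - rewrite IH, <- lsum_plus. reflexivity.
Qed.

Lemma lsum_perm {T} (l1 l2 : list T) h : Permutation l1 l2 -> lsum l1 h = lsum l2 h.
Proof. induction 1; rewrite ?lsum_cons; try rewrite IHPermutation; try ring; lra. Qed.

Lemma lsum_filter {T} (f : T -> bool) l h :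
  lsum (filter f l) h = lsum l (fun x => if f x then h x else 0).
Proof.
  induction l as [|a l IH]; simpl filter; rewrite ?lsum_cons, ?lsum_nil; [ring|].
  destruct (f a); rewrite ?lsum_cons, IH; ring.
Qed.

Definition ind (P : Prop) : R := if excluded_middle_informative P then 1 else 0.

Lemma lsum_ind {T} (l : list T) z0 h : NoDup l -> In z0 l ->
  lsum l (fun z => ind (z = z0) * h z) = h z0.
Proof.
  induction l as [|a l IH]; intros Hnd Hin; [destruct Hin|]. inversion Hnd; subst.
  rewrite lsum_cons. unfold ind at 1. destruct (excluded_middle_informative (a = z0)) as [<-|Ha].
  - rewrite lsum_zero; [ring|]. intros z Hz. unfold ind.
    destruct (excluded_middle_informative (z = a)); [subst; contradiction | ring].
  - destruct Hin as [->|Hin]; [congruence|]. rewrite IH by auto. ring.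
Qed.

(** Farkas' lemma, proved by Fourier–Motzkin elimination. *)

Lemma separating_value {T} (U Lo : list T) (fu fl : T -> R) :
  (forall a b, In a Lo -> In b U -> fl a <= fu b) ->
  exists t, (forall b, In b U -> t <= fu b) /\ (forall a, In a Lo -> fl a <= t).
Proof.
  induction U as [|b U IH]; intros H.
  - assert (exists m, forall a, In a Lo -> fl a <= m) as [m Hm].
    { clear H. induction Lo as [|a Lo [m Hm]]; [exists 0; intros a []|].
      exists (Rmax (fl a) m). intros a' [<-|Ha]; [apply Rmax_l|].
      eapply Rle_trans; [apply Hm; auto | apply Rmax_r]. }
    exists m; split; [intros b [] | auto].
  - destruct IH as [t0 [H1 H2]]; [intros; apply H; simpl; auto|].
    exists (Rmin t0 (fu b)). split.
    + intros b' [<-|Hb]; [apply Rmin_r | eapply Rle_trans; [apply Rmin_l | auto]].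
    + intros a Ha. apply Rmin_glb; auto. apply H; simpl; auto.
Qed.

Section Farkas.

Variable V : Type.

(* The constraint (a, b) reads  sum_{w in vs} a(w) x(w) <= b. *)
Definition constraint : Type := ((V -> R) * R)%type.

Definition feasible (vs : list V) (L : list constraint) (x : V -> R) : Prop :=
  forall c, In c L -> lsum vs (fun w => fst c w * x w) <= snd c.

Definition certificate (vs : list V) (L : list constraint) (y : constraint -> R) : Prop :=
  (forall c, In c L -> 0 <= y c) /\
  (forall w, In w vs -> lsum L (fun c => y c * fst c w) = 0) /\
  lsum L (fun c => y c * snd c) < 0.

Definition is_pos (r : R) : bool := if Rlt_dec 0 r then true else false.
Definition is_neg (r : R) : bool := if Rlt_dec r 0 then true else false.
Definition is_zero (r : R) : bool := if Req_dec_T r 0 then true else false.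

Lemma is_pos_spec r : is_pos r = true <-> 0 < r.
Proof. unfold is_pos; destruct (Rlt_dec 0 r); split; congruence || tauto. Qed.
Lemma is_neg_spec r : is_neg r = true <-> r < 0.
Proof. unfold is_neg; destruct (Rlt_dec r 0); split; congruence || tauto. Qed.
Lemma is_zero_spec r : is_zero r = true <-> r = 0.
Proof. unfold is_zero; destruct (Req_dec_T r 0); split; congruence || tauto. Qed.

Section Elimination.

Variable v : V.

(* The positive combination of p (coefficient of v positive) and q (coefficient
   of v negative) in which v cancels. *)
Definition fm_comb (p q : constraint) : constraint :=
  (fun w => (- fst q v) * fst p w + fst p v * fst q w,
   (- fst q v) * snd p + fst p v * snd q).

Definition part (sel : R -> bool) (L : list constraint) := filter (fun c => sel (fst c v)) L.

Definition fm_eliminate (L : list constraint) : list constraint :=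
  part is_zero L ++ flat_map (fun p => map (fm_comb p) (part is_neg L)) (part is_pos L).

Lemma in_part sel L c : In c (part sel L) <-> In c L /\ sel (fst c v) = true.
Proof. apply filter_In. Qed.

Lemma lsum_part sel L h :
  lsum (part sel L) h = lsum L (fun c => if sel (fst c v) then h c else 0).
Proof. apply lsum_filter. Qed.

Lemma fm_eliminate_free L c : In c (fm_eliminate L) -> fst c v = 0.
Proof.
  intros Hc. apply in_app_or in Hc as [Hc|Hc].
  - apply in_part, proj2, is_zero_spec in Hc. exact Hc.
  - apply in_flat_map in Hc as [p [_ Hc]]. apply in_map_iff in Hc as [q [<- _]].
    simpl. ring.
Qed.

Lemma in_fm_comb L p q : In p L -> 0 < fst p v -> In q L -> fst q v < 0 ->
  In (fm_comb p q) (fm_eliminate L).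
Proof.
  intros Hp Hpv Hq Hqv. apply in_or_app; right. apply in_flat_map. exists p.
  split; [apply in_part; split; [auto | apply is_pos_spec; auto]|].
  apply in_map, in_part. split; [auto | apply is_neg_spec; auto].
Qed.

(* A solution of the eliminated system extends to a solution of the original:
   v is given any value between the induced lower and upper bounds. *)
Lemma fm_feasible_lift vs L x : ~ In v vs ->
  feasible vs (fm_eliminate L) x -> exists x', feasible (v :: vs) L x'.
Proof.
  intros Hv Hx.
  set (d := fun c : constraint => lsum vs (fun w => fst c w * x w)).
  set (bound_v := fun c : constraint => (snd c - d c) / fst c v).
  destruct (separating_value (part is_pos L) (part is_neg L) bound_v bound_v)
    as [t [Hup Hlow]].
  { intros q p Hq Hp. apply in_part in Hq as [Hq Hqv], Hp as [Hp Hpv].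
    apply is_neg_spec in Hqv. apply is_pos_spec in Hpv.
    specialize (Hx _ (in_fm_comb L p q Hp Hpv Hq Hqv)). simpl in Hx.
    rewrite (lsum_ext _ _ (fun w => (- fst q v) * (fst p w * x w) + fst p v * (fst q w * x w)))
      in Hx by (intros; ring).
    rewrite lsum_plus, !lsum_scal in Hx. fold (d p) (d q) in Hx.
    unfold bound_v. apply Rmult_le_reg_r with (fst p v * - fst q v); [nra|].
    replace ((snd q - d q) / fst q v * (fst p v * - fst q v)) with (- (snd q - d q) * fst p v)
      by (field; lra).
    replace ((snd p - d p) / fst p v * (fst p v * - fst q v)) with ((snd p - d p) * - fst q v)
      by (field; lra).
    nra. }
  exists (fun w => if excluded_middle_informative (w = v) then t else x w).
  intros c Hc. rewrite lsum_cons.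
  destruct (excluded_middle_informative (v = v)) as [_|]; [|congruence].
  rewrite (lsum_ext vs _ (fun w => fst c w * x w)).
  2:{ intros w Hw. destruct (excluded_middle_informative (w = v)); [subst; contradiction | auto]. }
  fold (d c).
  destruct (total_order_T (fst c v) 0) as [[Hneg|Hzero]|Hpos].
  - assert (Hb := Hlow c (proj2 (in_part _ _ _) (conj Hc (proj2 (is_neg_spec _) Hneg)))).
    unfold bound_v in Hb. apply Rmult_le_compat_r with (r := - fst c v) in Hb; [|lra].
    replace ((snd c - d c) / fst c v * - fst c v) with (d c - snd c) in Hb by (field; lra).
    lra.
  - assert (Hin : In c (fm_eliminate L)).
    { apply in_or_app; left. apply in_part. split; [auto | apply is_zero_spec; auto]. }
    specialize (Hx _ Hin). fold (d c) in Hx. rewrite Hzero. lra.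
  - assert (Hb := Hup c (proj2 (in_part _ _ _) (conj Hc (proj2 (is_pos_spec _) Hpos)))).
    unfold bound_v in Hb. apply Rmult_le_compat_r with (r := fst c v) in Hb; [|lra].
    replace ((snd c - d c) / fst c v * fst c v) with (snd c - d c) in Hb by (field; lra).
    lra.
Qed.

Definition fm_pullback (L : list constraint) (y' : constraint -> R) (c : constraint) : R :=
  (if is_zero (fst c v) then y' c else 0)
  + (if is_pos (fst c v) then lsum (part is_neg L) (fun q => y' (fm_comb c q) * (- fst q v)) else 0)
  + (if is_neg (fst c v) then lsum (part is_pos L) (fun p => y' (fm_comb p c) * fst p v) else 0).

Lemma fm_pullback_sum L y' (F : constraint -> R) :
  (forall p q, F (fm_comb p q) = (- fst q v) * F p + fst p v * F q) ->
  lsum L (fun c => fm_pullback L y' c * F c) = lsum (fm_eliminate L) (fun c => y' c * F c).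
Proof.
  intros HF. unfold fm_eliminate. rewrite lsum_app, lsum_flat_map.
  unfold fm_pullback.
  rewrite (lsum_ext L _ (fun c =>
     (if is_zero (fst c v) then y' c * F c else 0) +
     (if is_pos (fst c v) then lsum (part is_neg L) (fun q => y' (fm_comb c q) * (- fst q v)) * F c else 0) +
     (if is_neg (fst c v) then lsum (part is_pos L) (fun p => y' (fm_comb p c) * fst p v) * F c else 0)))
    by (intros c _; destruct (is_zero _), (is_pos _), (is_neg _); ring).
  rewrite !lsum_plus, <- !lsum_part.
  rewrite (lsum_ext (part is_pos L) (fun p => lsum (map (fm_comb p) _) _)
    (fun p => lsum (part is_neg L) (fun q => y' (fm_comb p q) * (- fst q v)) * F p +
              lsum (part is_neg L) (fun q => y' (fm_comb p q) * fst p v * F q))).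
  2:{ intros p _. rewrite lsum_map, <- lsum_scal_r, <- lsum_plus. apply lsum_ext.
      intros q _. rewrite HF. ring. }
  rewrite lsum_plus, (lsum_swap (part is_pos L) (part is_neg L)).
  rewrite (lsum_ext (part is_neg L) (fun q => lsum _ _)
    (fun q => lsum (part is_pos L) (fun p => y' (fm_comb p q) * fst p v) * F q))
    by (intros; rewrite <- lsum_scal_r; reflexivity).
  rewrite Rplus_assoc. reflexivity.
Qed.

Lemma fm_pullback_nonneg L y' c : In c L ->
  (forall c', In c' (fm_eliminate L) -> 0 <= y' c') -> 0 <= fm_pullback L y' c.
Proof.
  intros Hc Hy. unfold fm_pullback.
  assert (Hz : 0 <= (if is_zero (fst c v) then y' c else 0)).
  { destruct (is_zero (fst c v)) eqn:E; [|lra].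
    apply Hy, in_or_app; left; apply in_part; auto. }
  assert (Hpos : 0 <= (if is_pos (fst c v) then
                       lsum (part is_neg L) (fun q => y' (fm_comb c q) * (- fst q v)) else 0)).
  { destruct (is_pos (fst c v)) eqn:E; [|lra]. apply is_pos_spec in E.
    apply lsum_nonneg. intros q Hq. apply in_part in Hq as [Hq Hqv]. apply is_neg_spec in Hqv.
    apply Rmult_le_pos; [apply Hy, in_fm_comb; auto | lra]. }
  assert (Hneg : 0 <= (if is_neg (fst c v) then
                       lsum (part is_pos L) (fun p => y' (fm_comb p c) * fst p v) else 0)).
  { destruct (is_neg (fst c v)) eqn:E; [|lra]. apply is_neg_spec in E.
    apply lsum_nonneg. intros p Hp. apply in_part in Hp as [Hp Hpv]. apply is_pos_spec in Hpv.
    apply Rmult_le_pos; [apply Hy, in_fm_comb; auto | lra]. }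
  lra.
Qed.

Lemma fm_certificate_lift vs L y' :
  certificate vs (fm_eliminate L) y' -> certificate (v :: vs) L (fm_pullback L y').
Proof.
  intros [Hy1 [Hy2 Hy3]]. split; [|split].
  - intros c Hc. apply fm_pullback_nonneg; auto.
  - intros w [<-|Hw].
    + rewrite (fm_pullback_sum L y' (fun c => fst c v)) by reflexivity.
      apply lsum_zero. intros c Hc. rewrite (fm_eliminate_free L c Hc). ring.
    + rewrite (fm_pullback_sum L y' (fun c => fst c w)) by reflexivity. auto.
  - rewrite (fm_pullback_sum L y' snd) by reflexivity. auto.
Qed.

End Elimination.

Lemma farkas (vs : list V) : NoDup vs -> forall L : list constraint,
  ~ (exists x, feasible vs L x) -> exists y, certificate vs L y.
Proof.
  induction vs as [|v vs IH]; intros Hnd L Hinf.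
  - assert (exists c, In c L /\ snd c < 0) as [c0 [Hc0 Hneg]].
    { apply NNPP; intros Hn. apply Hinf. exists (fun _ => 0). intros c Hc.
      rewrite lsum_nil. apply Rnot_lt_le. intros Hl. apply Hn. exists c; auto. }
    exists (fun c => if Rlt_dec (snd c) 0 then 1 else 0). split; [|split].
    + intros c _. destruct (Rlt_dec (snd c) 0); lra.
    + intros w [].
    + apply lsum_neg.
      * intros c _. destruct (Rlt_dec (snd c) 0); lra.
      * exists c0; split; auto. destruct (Rlt_dec (snd c0) 0); lra.
  - inversion Hnd as [|? ? Hv Hnd']; subst.
    destruct (IH Hnd' (fm_eliminate v L)) as [y' Hy'].
    { intros [x Hx]. apply Hinf. apply (fm_feasible_lift v vs L x); auto. }
    exists (fm_pullback v L y'). apply fm_certificate_lift; auto.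
Qed.

End Farkas.

Arguments feasible {V}.
Arguments certificate {V}.

Definition finsupp {T} (u : T -> R) : Prop := exists s, fin_supp u s.

Lemma supp_exact {T} (u : T -> R) : finsupp u ->
  exists S, NoDup S /\ forall x, In x S <-> u x <> 0.
Proof.
  intros [s [Hnd Hs]].
  exists (filter (fun x => if Req_dec_T (u x) 0 then false else true) s). split.
  - apply NoDup_filter; auto.
  - intros x. rewrite filter_In.
    destruct (Req_dec_T (u x) 0); split; intros H; try tauto.
    + destruct H; discriminate.
    + split; auto.
Qed.

Lemma lsum_supp {T} (u h : T -> R) l S : NoDup l -> NoDup S ->
  (forall x, In x S <-> u x <> 0) -> (forall x, u x <> 0 -> In x l) ->
  lsum l (fun x => u x * h x) = lsum S (fun x => u x * h x).
Proof.
  intros Hl HS HSe Hsub.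
  set (nz := fun x => if Req_dec_T (u x) 0 then false else true).
  rewrite (lsum_ext l _ (fun x => if nz x then u x * h x else 0)).
  2:{ intros x _. unfold nz. destruct (Req_dec_T (u x) 0) as [E|]; [rewrite E; ring | auto]. }
  rewrite <- lsum_filter. apply lsum_perm, NoDup_Permutation; [apply NoDup_filter; auto | auto |].
  intros x. rewrite filter_In, HSe. unfold nz.
  destruct (Req_dec_T (u x) 0); split; intros H; try tauto.
  - destruct H; discriminate.
  - split; auto.
Qed.

Lemma fsum_eq_lsum {T} (u : T -> R) (L : list T) h : NoDup L ->
  (forall x, u x <> 0 -> In x L) -> fsum u h = lsum L (fun x => u x * h x).
Proof.
  intros HL Hsub. unfold fsum.
  destruct (excluded_middle_informative (exists s, fin_supp u s)) as [H|H].
  2:{ exfalso; apply H; exists L; split; auto. }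
  destruct (constructive_indefinite_description _ H) as [s [Hs1 Hs2]]. simpl.
  change (lsum s (fun x => u x * h x) = lsum L (fun x => u x * h x)).
  destruct (supp_exact u H) as [S [HS HSe]].
  rewrite (lsum_supp u h s S), (lsum_supp u h L S); auto.
Qed.

Lemma fsum_ext {T} (u : T -> R) h1 h2 : finsupp u ->
  (forall x, u x <> 0 -> h1 x = h2 x) -> fsum u h1 = fsum u h2.
Proof.
  intros [s [Hs1 Hs2]] H. rewrite !(fsum_eq_lsum u s) by auto.
  apply lsum_ext. intros x _.
  destruct (Req_dec_T (u x) 0) as [E|E]; [rewrite E; ring | rewrite H; auto].
Qed.

Lemma fsum_hlin {T} (u : T -> R) h1 h2 a b : finsupp u ->
  fsum u (fun x => a * h1 x + b * h2 x) = a * fsum u h1 + b * fsum u h2.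
Proof.
  intros [s [H1 H2]]. rewrite !(fsum_eq_lsum u s) by auto.
  rewrite <- !lsum_scal, <- lsum_plus. apply lsum_ext; intros; ring.
Qed.

Lemma fsum_const {T} (u : T -> R) c : finsupp u -> fsum u (fun _ => c) = c * fsum u (fun _ => 1).
Proof.
  intros [s [H1 H2]]. rewrite !(fsum_eq_lsum u s), <- lsum_scal by auto.
  apply lsum_ext; intros; ring.
Qed.

Lemma fsum_le {T} (u : T -> R) h1 h2 : finsupp u -> (forall x, 0 <= u x) ->
  (forall x, u x <> 0 -> h1 x <= h2 x) -> fsum u h1 <= fsum u h2.
Proof.
  intros [s [H1 H2]] Hp H. rewrite !(fsum_eq_lsum u s) by auto.
  apply lsum_le. intros x _. destruct (Req_dec_T (u x) 0) as [E|E]; [rewrite E; lra|].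
  apply Rmult_le_compat_l; auto.
Qed.

Lemma fsum_abs {T} (u : T -> R) h : finsupp u -> (forall x, 0 <= u x) ->
  Rabs (fsum u h) <= fsum u (fun x => Rabs (h x)).
Proof.
  intros [s [H1 H2]] Hp. rewrite !(fsum_eq_lsum u s) by auto.
  eapply Rle_trans; [apply lsum_abs|]. apply lsum_le. intros x _.
  rewrite Rabs_mult, (Rabs_right (u x)) by (apply Rle_ge; auto). lra.
Qed.

Lemma fsum_dist_le {T} (X : T -> Prop) (u h : T -> R) c : distf X u ->
  (forall x, X x -> h x <= c) -> fsum u h <= c.
Proof.
  intros [Hp [HX [Hs H1]]] Hh. rewrite <- (Rmult_1_r c), <- H1, <- fsum_const by auto.
  apply fsum_le; auto.
Qed.

Lemma supp_union {T I} (Il : list I) (mu : I -> T -> R) :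
  (forall i, In i Il -> finsupp (mu i)) ->
  exists L, NoDup L /\ forall i x, In i Il -> mu i x <> 0 -> In x L.
Proof.
  induction Il as [|i Il IH]; intros H.
  - exists []; split; [constructor | intros ? ? []].
  - destruct IH as [L [HL HL2]]; [intros; apply H; right; auto|].
    destruct (H i (or_introl eq_refl)) as [s [Hs1 Hs2]].
    exists (nodup (fun a b => excluded_middle_informative (a = b)) (s ++ L)).
    split; [apply NoDup_nodup|].
    intros j x [<-|Hj] Hx; apply nodup_In, in_or_app; [left; auto | right; eauto].
Qed.

Lemma fsum_comb {T I} (Il : list I) (c : I -> R) (mu : I -> T -> R) (m : T -> R) :
  (forall i, In i Il -> finsupp (mu i)) ->
  (forall x, m x = lsum Il (fun i => c i * mu i x)) ->
  finsupp m /\ forall f, fsum m f = lsum Il (fun i => c i * fsum (mu i) f).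
Proof.
  intros Hs Hm. destruct (supp_union Il mu Hs) as [L [HL HL2]].
  assert (Hsub : forall x, m x <> 0 -> In x L).
  { intros x Hx. apply NNPP; intros Hn. apply Hx. rewrite Hm. apply lsum_zero.
    intros i Hi. destruct (Req_dec_T (mu i x) 0) as [E|E]; [rewrite E; ring | exfalso; eauto]. }
  split; [exists L; split; auto|].
  intros f. rewrite (fsum_eq_lsum m L) by auto.
  rewrite (lsum_ext L _ (fun x => lsum Il (fun i => c i * (mu i x * f x)))).
  2:{ intros x _. rewrite Hm, <- lsum_scal_r. apply lsum_ext; intros; ring. }
  rewrite lsum_swap. apply lsum_ext. intros i Hi. rewrite lsum_scal. f_equal.
  symmetry; apply fsum_eq_lsum; eauto.
Qed.

Lemma fsum_mlin {T} (u1 u2 : T -> R) a b : finsupp u1 -> finsupp u2 ->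
  finsupp (fun x => a * u1 x + b * u2 x) /\
  forall h, fsum (fun x => a * u1 x + b * u2 x) h = a * fsum u1 h + b * fsum u2 h.
Proof.
  intros H1 H2.
  destruct (fsum_comb [true; false] (fun i : bool => if i then a else b)
     (fun i : bool => if i then u1 else u2) (fun x => a * u1 x + b * u2 x)) as [E F].
  - intros [|] _; auto.
  - intros x. rewrite !lsum_cons, lsum_nil. ring.
  - split; auto. intros h. rewrite F, !lsum_cons, lsum_nil. ring.
Qed.

(** Part 1: affinity of Fhat. *)

Section Affinity.

Variables (X : point -> Prop) (A : Type).
Variables (q : point -> A -> point -> R) (g : point -> A -> R).

Definition policy (sigma : point -> A -> R) : Prop :=
  forall x, X x -> distf (fun _ : A => True) (sigma x).

Definition Fimage (u : point -> R) (sigma : point -> A -> R) : Zelt :=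
  ((fun x' => fsum u (fun x => qext q x (sigma x) x')), fsum u (fun x => gext g x (sigma x))).

Lemma Fhat_Fimage z w : Fhat X q g z w <-> exists sigma, policy sigma /\ w = Fimage (fst z) sigma.
Proof. reflexivity. Qed.

Lemma Fimage_comb l u1 u2 sigma : finsupp u1 -> finsupp u2 ->
  Fimage (fun x => l * u1 x + (1 - l) * u2 x) sigma =
  combZ l (Fimage u1 sigma) (Fimage u2 sigma).
Proof.
  intros H1 H2. destruct (fsum_mlin u1 u2 l (1 - l) H1 H2) as [_ Hlin].
  unfold Fimage, combZ; simpl. f_equal; [apply functional_extensionality; intros x'|]; apply Hlin.
Qed.

Section Merge.

Variables (l : R) (u1 u2 : point -> R) (s1 s2 : point -> A -> R).
Hypothesis Hl : 0 <= l <= 1.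
Hypotheses (Hu1 : distf X u1) (Hu2 : distf X u2).
Hypotheses (Hs1 : policy s1) (Hs2 : policy s2).

Let u x := l * u1 x + (1 - l) * u2 x.

(* At state x, play s1 and s2 with probabilities proportional to the mass
   l u1(x) and (1-l) u2(x) they contribute to the mixture u. *)
Definition merged_policy (x : point) : A -> R :=
  if Req_dec_T (u x) 0 then s1 x
  else fun a => (l * u1 x / u x) * s1 x a + ((1 - l) * u2 x / u x) * s2 x a.

Lemma mixture_nonneg x : 0 <= l * u1 x /\ 0 <= (1 - l) * u2 x.
Proof. destruct Hu1 as [P1 _], Hu2 as [P2 _]. specialize (P1 x). specialize (P2 x). nra. Qed.

Lemma mixture_support x : u x <> 0 -> X x.
Proof.
  intros Hx. destruct Hu1 as [_ [X1 _]], Hu2 as [_ [X2 _]].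
  destruct (Req_dec_T (u1 x) 0) as [E|E]; [|auto].
  apply X2. intros E2. apply Hx. unfold u. rewrite E, E2; ring.
Qed.

Lemma merged_policy_sum x (h : A -> R) : u x <> 0 ->
  u x * fsum (merged_policy x) h = l * u1 x * fsum (s1 x) h + (1 - l) * u2 x * fsum (s2 x) h.
Proof.
  intros Hx. unfold merged_policy. destruct (Req_dec_T (u x) 0) as [|_]; [contradiction|].
  destruct (Hs1 x (mixture_support x Hx)) as [_ [_ [F1 _]]].
  destruct (Hs2 x (mixture_support x Hx)) as [_ [_ [F2 _]]].
  rewrite (proj2 (fsum_mlin (s1 x) (s2 x) _ _ F1 F2)). field; auto.
Qed.

Lemma merged_policy_ok : policy merged_policy.
Proof.
  intros x Hx. unfold merged_policy. destruct (Req_dec_T (u x) 0) as [E|E]; [auto|].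
  destruct (mixture_nonneg x) as [N1 N2].
  assert (Hu : 0 < u x) by (unfold u in *; lra).
  destruct (Hs1 x Hx) as [P1 [_ [F1 S1]]], (Hs2 x Hx) as [P2 [_ [F2 S2]]].
  destruct (fsum_mlin (s1 x) (s2 x) (l * u1 x / u x) ((1 - l) * u2 x / u x) F1 F2) as [Fs Hf].
  split; [|split; [auto | split; [auto|]]].
  - intros a. specialize (P1 a). specialize (P2 a).
    assert (0 <= l * u1 x / u x) by (unfold Rdiv; apply Rmult_le_pos; [lra | left; apply Rinv_0_lt_compat; lra]).
    assert (0 <= (1 - l) * u2 x / u x) by (unfold Rdiv; apply Rmult_le_pos; [lra | left; apply Rinv_0_lt_compat; lra]).
    nra.
  - rewrite Hf, S1, S2. unfold u in *. field. lra.
Qed.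

Lemma merged_policy_average (h : point -> A -> R) :
  fsum u (fun x => fsum (merged_policy x) (h x)) =
  l * fsum u1 (fun x => fsum (s1 x) (h x)) + (1 - l) * fsum u2 (fun x => fsum (s2 x) (h x)).
Proof.
  destruct (supp_union [u1; u2] (fun v => v)) as [L [HL Hcov]].
  { intros v [<-|[<-|[]]]; [apply Hu1 | apply Hu2]. }
  assert (HL1 : forall x, u1 x <> 0 -> In x L) by (intros; apply (Hcov u1); simpl; auto).
  assert (HL2 : forall x, u2 x <> 0 -> In x L) by (intros; apply (Hcov u2); simpl; auto).
  assert (HLu : forall x, u x <> 0 -> In x L).
  { intros x Hx. destruct (Req_dec_T (u1 x) 0) as [E|E]; [|auto]. apply HL2.
    intros E2; apply Hx; unfold u; rewrite E, E2; ring. }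
  rewrite (fsum_eq_lsum u L), (fsum_eq_lsum u1 L), (fsum_eq_lsum u2 L) by auto.
  rewrite <- !lsum_scal, <- lsum_plus. apply lsum_ext. intros x _.
  destruct (Req_dec_T (u x) 0) as [E|E].
  - rewrite E. destruct (mixture_nonneg x) as [N1 N2]. unfold u in E.
    transitivity (l * u1 x * fsum (s1 x) (h x) + (1 - l) * u2 x * fsum (s2 x) (h x)); [|ring].
    replace (l * u1 x) with 0 by lra. replace ((1 - l) * u2 x) with 0 by lra. ring.
  - rewrite merged_policy_sum by auto. ring.
Qed.

End Merge.

(* Statement 1 of the theorem: Fhat maps convex combinations to Minkowski
   combinations.  The inclusion from left to right keeps the policy; the
   converse merges the two policies state by state. *)
Lemma Fhat_affine z z' l : inZ X z -> inZ X z' -> 0 <= l <= 1 ->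
  forall w, Fhat X q g (combZ l z z') w <->
    exists w1 w2, Fhat X q g z w1 /\ Fhat X q g z' w2 /\ w = combZ l w1 w2.
Proof.
  intros [Hu1 _] [Hu2 _] Hl w. rewrite Fhat_Fimage. split.
  - intros [sigma [Hsig ->]]. exists (Fimage (fst z) sigma), (Fimage (fst z') sigma).
    split; [exists sigma; auto|]. split; [exists sigma; auto|].
    apply Fimage_comb; [apply Hu1 | apply Hu2].
  - intros [w1 [w2 [[s1 [Hs1 ->]] [[s2 [Hs2 ->]] ->]]]].
    exists (merged_policy l (fst z) (fst z') s1 s2). split; [apply merged_policy_ok; auto|].
    unfold Fimage, combZ; simpl. f_equal.
    + apply functional_extensionality; intros x'. unfold qext.
      symmetry; apply (merged_policy_average l (fst z) (fst z') s1 s2 Hl Hu1 Hu2 Hs1 Hs2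
                         (fun x a => q x a x')).
    + unfold gext. symmetry; apply (merged_policy_average l (fst z) (fst z') s1 s2 Hl Hu1 Hu2 Hs1 Hs2 g).
Qed.

End Affinity.

Arguments policy X {A} sigma.
Arguments Fimage {A} q g u sigma.

Lemma norm1_lsum n z : norm1 n z = lsum (seq 0 n) (fun i => Rabs (z i)).
Proof. reflexivity. Qed.

Lemma norm1_nonneg n z : 0 <= norm1 n z.
Proof. rewrite norm1_lsum. apply lsum_nonneg. intros; apply Rabs_pos. Qed.

Lemma norm1_lincomb_sym n a x b y : norm1 n (lincomb a x b y) = norm1 n (lincomb b y a x).
Proof. rewrite !norm1_lsum. apply lsum_ext. intros. unfold lincomb. apply Rabs_minus_sym. Qed.

(* Functions of D_1 are bounded by 1 on the simplex (take (a,b) = (1,0), (0,1)). *)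
Lemma D1_bound n f x : D1 n f -> simplex n x -> -1 <= f x <= 1.
Proof.
  intros [_ Hf] Hx.
  assert (Hn : norm1 n x = 1).
  { destruct Hx as [H1 [_ H3]]. rewrite norm1_lsum, <- H3. apply lsum_ext.
    intros i Hi. apply in_seq in Hi. apply Rabs_right, Rle_ge, H1. lia. }
  assert (Hl : norm1 n (lincomb 1 x 0 x) = 1).
  { rewrite <- Hn at 2. rewrite !norm1_lsum. apply lsum_ext; intros. unfold lincomb. f_equal; ring. }
  assert (Hr : norm1 n (lincomb 0 x 1 x) = 1) by (rewrite norm1_lincomb_sym; auto).
  pose proof (Hf x x Hx Hx 1 0 ltac:(lra) ltac:(lra)).
  pose proof (Hf x x Hx Hx 0 1 ltac:(lra) ltac:(lra)). lra.
Qed.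

Lemma D1_zero n : D1 n (fun _ => 0).
Proof.
  split.
  - intros x _ eps He. exists 1. split; [lra|]. intros. rewrite Rminus_0_r, Rabs_R0; auto.
  - intros. rewrite !Rmult_0_r, Rminus_0_r. apply norm1_nonneg.
Qed.

Section Dstar.

Variables (n : nat) (u v : point -> R).

Lemma dstar_set_zero : finsupp u -> finsupp v -> dstar_set n u v 0.
Proof.
  intros Hu Hv. exists (fun _ => 0). split; [apply D1_zero|].
  rewrite (fsum_const u), (fsum_const v) by auto. ring.
Qed.

Lemma dstar_set_bounded (X : point -> Prop) : (forall x, X x -> simplex n x) ->
  distf X u -> distf X v -> bound (dstar_set n u v).
Proof.
  intros HX Hu Hv. exists 2. intros t [f [Hf ->]].
  assert (fsum u f <= 1)
    by (apply (fsum_dist_le X); auto; intros; apply (D1_bound n); auto).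
  assert (fsum v (fun x => - f x) <= 1)
    by (apply (fsum_dist_le X); auto; intros x Hx; pose proof (D1_bound n f x Hf (HX x Hx)); lra).
  rewrite (fsum_ext v (fun x => - f x) (fun x => (-1) * f x + 0 * f x)),
    fsum_hlin in H0 by (apply Hv || (intros; ring)).
  lra.
Qed.

Lemma dstar_ge (X : point -> Prop) f : (forall x, X x -> simplex n x) ->
  distf X u -> distf X v -> D1 n f -> fsum u f - fsum v f <= dstar n u v.
Proof.
  intros HX Hu Hv Hf. unfold dstar.
  destruct (excluded_middle_informative _) as [H|H].
  - destruct (completeness _ _ _) as [m [Hm1 Hm2]]. simpl. apply Hm1. exists f; auto.
  - exfalso. apply H. split; [apply (dstar_set_bounded X); auto|].
    exists 0. apply dstar_set_zero; [apply Hu | apply Hv].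
Qed.

Lemma dstar_le D : 0 <= D -> (forall f, D1 n f -> fsum u f - fsum v f <= D) ->
  dstar n u v <= D.
Proof.
  intros HD H. unfold dstar.
  destruct (excluded_middle_informative _) as [E|E]; [|auto].
  destruct (completeness _ _ _) as [m [Hm1 Hm2]]. simpl. apply Hm2.
  intros t [f [Hf ->]]. auto.
Qed.

Lemma dstar_nonneg : finsupp u -> finsupp v -> 0 <= dstar n u v.
Proof.
  intros Hu Hv. unfold dstar. destruct (excluded_middle_informative _) as [E|E]; [|lra].
  destruct (completeness _ _ _) as [m [Hm1 Hm2]]. simpl. apply Hm1.
  apply dstar_set_zero; auto.
Qed.

End Dstar.

(** Test functions: max-min of linear forms with coefficients in [-1, 1] lie in D_1. *)

Definition listmax (l : list R) : R := match l with [] => 0 | a :: l' => fold_right Rmax a l' end.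
Definition listmin (l : list R) : R := match l with [] => 0 | a :: l' => fold_right Rmin a l' end.

Lemma listmax_ge l b : In b l -> b <= listmax l.
Proof.
  destruct l as [|a l]; [intros []|]. simpl listmax.
  assert (H : a <= fold_right Rmax a l /\ forall c, In c l -> c <= fold_right Rmax a l).
  { induction l as [|c l [IH1 IH2]]; simpl; [split; [lra | intros _ []]|]. split.
    - eapply Rle_trans; [apply IH1 | apply Rmax_r].
    - intros d [<-|Hd]; [apply Rmax_l | eapply Rle_trans; [apply IH2; auto | apply Rmax_r]]. }
  intros [<-|Hb]; [apply (proj1 H) | apply (proj2 H); auto].
Qed.

Lemma listmax_in l : l <> [] -> In (listmax l) l.
Proof.
  destruct l as [|a l]; [congruence|]. intros _. simpl listmax.
  assert (H : fold_right Rmax a l = a \/ In (fold_right Rmax a l) l).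
  { induction l as [|c l IH]; simpl; [auto|].
    destruct (Rle_dec c (fold_right Rmax a l)).
    - rewrite Rmax_right by auto. destruct IH; auto.
    - rewrite Rmax_left by lra. auto. }
  destruct H as [H|H]; [rewrite H; left; auto | right; auto].
Qed.

Lemma listmin_le l b : In b l -> listmin l <= b.
Proof.
  destruct l as [|a l]; [intros []|]. simpl listmin.
  assert (H : fold_right Rmin a l <= a /\ forall c, In c l -> fold_right Rmin a l <= c).
  { induction l as [|c l [IH1 IH2]]; simpl; [split; [lra | intros _ []]|]. split.
    - eapply Rle_trans; [apply Rmin_r | apply IH1].
    - intros d [<-|Hd]; [apply Rmin_l | eapply Rle_trans; [apply Rmin_r | apply IH2; auto]]. }
  intros [<-|Hb]; [apply (proj1 H) | apply (proj2 H); auto].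
Qed.

Lemma listmin_in l : l <> [] -> In (listmin l) l.
Proof.
  destruct l as [|a l]; [congruence|]. intros _. simpl listmin.
  assert (H : fold_right Rmin a l = a \/ In (fold_right Rmin a l) l).
  { induction l as [|c l IH]; simpl; [auto|].
    destruct (Rle_dec c (fold_right Rmin a l)).
    - rewrite Rmin_left by auto. auto.
    - rewrite Rmin_right by lra. destruct IH; auto. }
  destruct H as [H|H]; [rewrite H; left; auto | right; auto].
Qed.

Section MaxMin.

Variables (n : nat) (S T : list point) (w : point -> point -> nat -> R).
Hypotheses (HS : S <> []) (HT : T <> []).
Definition linw (x z p : point) : R := lsum (seq 0 n) (fun k => w x z k * p k).

Definition Phi (p : point) : R := listmax (map (fun x => listmin (map (fun z => linw x z p) T)) S).

Lemma Phi_lower x0 c p : In x0 S -> (forall z, In z T -> c <= linw x0 z p) -> c <= Phi p.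
Proof.
  intros Hx Hc. eapply Rle_trans; [|apply listmax_ge, in_map, Hx].
  assert (Hin := listmin_in (map (fun z => linw x0 z p) T)).
  destruct T; [congruence|]. specialize (Hin ltac:(discriminate)).
  apply in_map_iff in Hin as [z [<- Hz]]. auto.
Qed.

Lemma Phi_upper z0 c p : In z0 T -> (forall x, In x S -> linw x z0 p <= c) -> Phi p <= c.
Proof.
  intros Hz Hc. unfold Phi.
  assert (Hin := listmax_in (map (fun x => listmin (map (fun z => linw x z p) T)) S)).
  destruct S; [congruence|]. specialize (Hin ltac:(discriminate)).
  apply in_map_iff in Hin as [x [Hx Hx']]. rewrite <- Hx.
  eapply Rle_trans; [apply listmin_le, in_map, Hz | auto].
Qed.

Hypothesis Hw : forall x z k, In x S -> In z T -> In k (seq 0 n) -> Rabs (w x z k) <= 1.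

(* The homogeneous Lipschitz inequality defining D_1: compare both values of
   Phi with a single linear form, chosen as the maximiser at p and the
   minimiser at p'. *)
Lemma Phi_lip p p' a b : 0 <= a -> 0 <= b -> a * Phi p - b * Phi p' <= norm1 n (lincomb a p b p').
Proof.
  intros Ha Hb.
  assert (Hin := listmax_in (map (fun x => listmin (map (fun z => linw x z p) T)) S)).
  specialize (Hin ltac:(destruct S; [congruence | discriminate])). apply in_map_iff in Hin as [x [Hx HxS]].
  assert (Hin2 := listmin_in (map (fun z => linw x z p') T)).
  specialize (Hin2 ltac:(destruct T; [congruence | discriminate])). apply in_map_iff in Hin2 as [z [Hz HzT]].
  assert (H1 : Phi p <= linw x z p).
  { unfold Phi. rewrite <- Hx. apply listmin_le, (in_map (fun z0 => linw x z0 p)); auto. }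
  assert (H2 : linw x z p' <= Phi p').
  { unfold Phi. rewrite Hz. apply listmax_ge, in_map_iff. exists x; split; auto. }
  apply Rle_trans with (a * linw x z p - b * linw x z p'); [nra|].
  unfold linw. rewrite <- !lsum_scal, <- lsum_minus, norm1_lsum. apply lsum_le.
  intros k Hk. unfold lincomb.
  replace (a * (w x z k * p k) - b * (w x z k * p' k)) with (w x z k * (a * p k - b * p' k)) by ring.
  eapply Rle_trans; [apply Rle_abs|]. rewrite Rabs_mult.
  rewrite <- (Rmult_1_l (Rabs (a * p k - b * p' k))) at 2.
  apply Rmult_le_compat_r; [apply Rabs_pos | apply Hw; auto].
Qed.

Lemma Phi_D1 : D1 n Phi.
Proof.
  split.
  - intros x _ eps He. exists eps. split; auto. intros y _ Hy. apply Rabs_def1.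
    + pose proof (Phi_lip x y 1 1 ltac:(lra) ltac:(lra)). lra.
    + pose proof (Phi_lip y x 1 1 ltac:(lra) ltac:(lra)).
      rewrite norm1_lincomb_sym in H. lra.
  - intros x y _ _ a b Ha Hb. apply Phi_lip; auto.
Qed.

End MaxMin.

(** Weak duality: a dual solution of the transport problem is dominated by d_*. *)

(* Dual variables: potentials a on the support S of u and b on the support T
   of v, a scale lam and per-pair, per-coordinate weights d with |d| <= lam. *)
Section WeakDuality.

Variables (n : nat) (X : point -> Prop) (u v : point -> R) (S T : list point).
Variables (a b : point -> R) (lam : R) (d : point -> point -> nat -> R).

Hypothesis HX : forall x, X x -> simplex n x.
Hypotheses (Hu : distf X u) (Hv : distf X v).
Hypotheses (HS : NoDup S) (HSe : forall x, In x S <-> u x <> 0).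
Hypotheses (HT : NoDup T) (HTe : forall z, In z T <-> v z <> 0).
Hypothesis Hlam : 0 <= lam.
Hypothesis Hd : forall x z k, In x S -> In z T -> In k (seq 0 n) -> Rabs (d x z k) <= lam.
Hypothesis Ha : forall x z, In x S -> In z T -> a x <= lsum (seq 0 n) (fun k => d x z k * x k).
Hypothesis Hb : forall x z, In x S -> In z T -> lsum (seq 0 n) (fun k => d x z k * z k) <= b z.

Lemma support_nonempty (w : point -> R) (L : list point) :
  fsum w (fun _ => 1) = 1 -> NoDup L -> (forall x, In x L <-> w x <> 0) -> L <> [].
Proof.
  intros H1 HL HLe E. rewrite (fsum_eq_lsum w L), E, lsum_nil in H1 by (auto; intros; apply HLe; auto).
  lra.
Qed.

(* With lam = 0 the weights vanish, so a <= 0 <= b on the supports. *)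
Lemma weak_duality_degenerate : lam = 0 ->
  lsum S (fun x => a x * u x) - lsum T (fun z => b z * v z) <= lam * dstar n u v.
Proof.
  intros E0.
  assert (HSne := support_nonempty u S (proj2 (proj2 (proj2 Hu))) HS HSe).
  assert (HTne := support_nonempty v T (proj2 (proj2 (proj2 Hv))) HT HTe).
  assert (exists x0, In x0 S) as [x0 Hx0] by (destruct S; [congruence | eexists; left; eauto]).
  assert (exists z0, In z0 T) as [z0 Hz0] by (destruct T; [congruence | eexists; left; eauto]).
  assert (Hlin0 : forall x z (p : point), In x S -> In z T -> lsum (seq 0 n) (fun k => d x z k * p k) = 0).
  { intros x z p Hx Hz. apply lsum_zero. intros k Hk.
    specialize (Hd x z k Hx Hz Hk). rewrite E0 in Hd.
    pose proof (Rle_abs (d x z k)). pose proof (Rle_abs (- d x z k)). rewrite Rabs_Ropp in *.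
    replace (d x z k) with 0 by lra. ring. }
  destruct Hu as [Hup _], Hv as [Hvp _].
  assert (lsum S (fun x => a x * u x) <= 0).
  { rewrite <- (lsum_zero S (fun _ => 0)) by auto. apply lsum_le. intros x Hx.
    specialize (Ha x z0 Hx Hz0). rewrite Hlin0 in Ha by auto. specialize (Hup x). nra. }
  assert (0 <= lsum T (fun z => b z * v z)).
  { apply lsum_nonneg. intros z Hz.
    specialize (Hb x0 z Hx0 Hz). rewrite Hlin0 in Hb by auto. specialize (Hvp z). nra. }
  rewrite E0. lra.
Qed.

(* With lam > 0 the max-min function Phi built from d / lam lies in D_1 and
   separates a / lam (below, on S) from b / lam (above, on T); integrating
   against u and v and using the definition of d_* gives the bound. *)
Lemma weak_duality_positive : 0 < lam ->
  lsum S (fun x => a x * u x) - lsum T (fun z => b z * v z) <= lam * dstar n u v.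
Proof.
  intros Hl.
  assert (HSne := support_nonempty u S (proj2 (proj2 (proj2 Hu))) HS HSe).
  assert (HTne := support_nonempty v T (proj2 (proj2 (proj2 Hv))) HT HTe).
  set (w := fun x z k => d x z k / lam).
  assert (HD1 : D1 n (Phi n S T w)).
  { apply Phi_D1; auto. intros x z k Hx Hz Hk. unfold w, Rdiv.
    rewrite Rabs_mult, Rabs_inv, (Rabs_right lam) by lra.
    apply Rmult_le_reg_r with lam; [lra|].
    rewrite Rmult_assoc, Rinv_l, Rmult_1_r, Rmult_1_l by lra. auto. }
  assert (Hlin : forall x z (p : point),
             lam * linw n w x z p = lsum (seq 0 n) (fun k => d x z k * p k)).
  { intros. unfold linw, w. rewrite <- lsum_scal. apply lsum_ext; intros. field. lra. }
  assert (Hlow : forall x, In x S -> a x <= lam * Phi n S T w x).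
  { intros x Hx. replace (a x) with (lam * (a x / lam)) by (field; lra).
    apply Rmult_le_compat_l; [lra|]. apply (Phi_lower n S T w HTne x); auto.
    intros z Hz. apply Rmult_le_reg_l with lam; [lra|].
    replace (lam * (a x / lam)) with (a x) by (field; lra). rewrite Hlin. auto. }
  assert (Hupp : forall z, In z T -> lam * Phi n S T w z <= b z).
  { intros z Hz. replace (b z) with (lam * (b z / lam)) by (field; lra).
    apply Rmult_le_compat_l; [lra|]. apply (Phi_upper n S T w HSne z); auto.
    intros x Hx. apply Rmult_le_reg_l with lam; [lra|].
    replace (lam * (b z / lam)) with (b z) by (field; lra). rewrite Hlin. auto. }
  assert (Hdual := dstar_ge n u v X _ HX Hu Hv HD1).
  rewrite (fsum_eq_lsum u S), (fsum_eq_lsum v T) in Hdual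
    by (auto; intros; apply HSe || apply HTe; auto).
  apply Rmult_le_compat_l with (r := lam) in Hdual; [|lra].
  rewrite Rmult_minus_distr_l, <- !lsum_scal in Hdual.
  destruct Hu as [Hup _], Hv as [Hvp _].
  assert (lsum S (fun x => a x * u x) <= lsum S (fun x => lam * (u x * Phi n S T w x))).
  { apply lsum_le. intros x Hx. specialize (Hlow x Hx). specialize (Hup x). nra. }
  assert (lsum T (fun z => lam * (v z * Phi n S T w z)) <= lsum T (fun z => b z * v z)).
  { apply lsum_le. intros z Hz. specialize (Hupp z Hz). specialize (Hvp z). nra. }
  lra.
Qed.

Lemma weak_duality :
  lsum S (fun x => a x * u x) - lsum T (fun z => b z * v z) <= lam * dstar n u v.
Proof.
  destruct (Req_dec_T lam 0) as [E0|E0].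
  - apply weak_duality_degenerate; auto.
  - apply weak_duality_positive; lra.
Qed.

End WeakDuality.

(** The transport linear program and its Farkas alternative. *)

Section SparseConstraints.

Variable V : Type.

(* A sparse constraint  sum_i c_i x(v_i) <= b,  given by the list of (c_i, v_i). *)
Definition sconstraint : Type := (list (R * V) * R)%type.

Definition dense (c : sconstraint) : constraint V :=
  (fun w => lsum (fst c) (fun p => fst p * ind (w = snd p)), snd c).

Definition eval_form (f : list (R * V)) (x : V -> R) : R := lsum f (fun p => fst p * x (snd p)).

Definition form_in (vs : list V) (f : list (R * V)) : Prop := forall p, In p f -> In (snd p) vs.

Lemma dense_lhs vs c x : NoDup vs -> form_in vs (fst c) ->
  lsum vs (fun w => fst (dense c) w * x w) = eval_form (fst c) x.
Proof.
  intros Hnd Hin. simpl.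
  rewrite (lsum_ext vs _ (fun w => lsum (fst c) (fun p => fst p * (ind (w = snd p) * x w))))
    by (intros; rewrite <- lsum_scal_r; apply lsum_ext; intros; ring).
  rewrite lsum_swap. apply lsum_ext. intros p Hp. rewrite lsum_scal, lsum_ind; auto.
Qed.

End SparseConstraints.

Arguments dense {V}.
Arguments eval_form {V}.
Arguments form_in {V}.
Arguments dense_lhs {V}.

Lemma NoDup_flat_map_key {A B} (key : B -> A) (F : A -> list B) l :
  NoDup l -> (forall a, In a l -> NoDup (F a)) ->
  (forall a e, In a l -> In e (F a) -> key e = a) -> NoDup (flat_map F l).
Proof.
  induction l as [|a l IH]; simpl; intros Hn HF Hk; [constructor|]. inversion Hn; subst.
  apply NoDup_app; auto.
  intros e He1 He2. apply in_flat_map in He2 as [a' [Ha' He']].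
  assert (key e = a) by auto. assert (key e = a') by auto. subst. congruence.
Qed.

(* Variables of the transport program: for each pair (x, y) the weights
   gamma(x,y) (VG) and gamma'(x,y) (VH) with which the pair is counted in the
   marginal of u and of v, and for each coordinate k a slack variable (VS)
   bounding |gamma(x,y) x_k - gamma'(x,y) y_k|. *)
Inductive lpvar : Type :=
  | VG (x y : point)
  | VH (x y : point)
  | VS (x y : point) (k : nat).

Definition coupling n (S T : list point) (u v : point -> R) (D : R)
  (gam gam' : point -> point -> R) : Prop :=
  (forall x y, In x S -> In y T -> 0 <= gam x y /\ 0 <= gam' x y) /\
  (forall x, In x S -> lsum T (fun y => gam x y) = u x) /\
  (forall y, In y T -> lsum S (fun x => gam' x y) = v y) /\
  lsum S (fun x => lsum T (fun y => norm1 n (lincomb (gam x y) x (gam' x y) y))) <= D.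

Section TransportLP.

Variables (n : nat) (S T : list point) (u v : point -> R) (D : R).
Hypotheses (HS : NoDup S) (HT : NoDup T).

Let K := seq 0 n.

Definition lp_block (x y : point) : list lpvar := VG x y :: VH x y :: map (VS x y) K.

Definition lp_vars : list lpvar := flat_map (fun x => flat_map (lp_block x) T) S.

Definition var_src (w : lpvar) : point := match w with VG x _ | VH x _ | VS x _ _ => x end.
Definition var_dst (w : lpvar) : point := match w with VG _ y | VH _ y | VS _ y _ => y end.

Lemma lp_block_keys x y w : In w (lp_block x y) -> var_src w = x /\ var_dst w = y.
Proof.
  intros [<-|[<-|Hw]]; simpl; auto. apply in_map_iff in Hw as [k [<- _]]. simpl; auto.
Qed.

Lemma lp_vars_nodup : NoDup lp_vars.
Proof.
  apply (NoDup_flat_map_key var_src); auto.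
  - intros x _. apply (NoDup_flat_map_key var_dst); auto.
    + intros y _. constructor; [|constructor].
      * intros [H|H]; [discriminate|]. apply in_map_iff in H as [? [H _]]. discriminate.
      * intros H. apply in_map_iff in H as [? [H _]]. discriminate.
      * apply FinFun.Injective_map_NoDup; [intros a b H; injection H; auto | apply seq_NoDup].
    + intros y e _ He. apply (lp_block_keys x y e He).
  - intros x e _ He. apply in_flat_map in He as [y [_ He]]. apply (lp_block_keys x y e He).
Qed.

Lemma in_lp_vars x y w : In x S -> In y T -> In w (lp_block x y) -> In w lp_vars.
Proof. intros Hx Hy Hw. apply in_flat_map. exists x; split; auto. apply in_flat_map; eauto. Qed.

Definition gam_nonneg x y : sconstraint lpvar := ([(-1, VG x y)], 0).
Definition gam'_nonneg x y : sconstraint lpvar := ([(-1, VH x y)], 0).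
Definition slack_pos x y k : sconstraint lpvar := ([(x k, VG x y); (- y k, VH x y); (-1, VS x y k)], 0).
Definition slack_neg x y k : sconstraint lpvar := ([(- x k, VG x y); (y k, VH x y); (-1, VS x y k)], 0).
Definition marg_le x : sconstraint lpvar := (map (fun y => (1, VG x y)) T, u x).
Definition marg_ge x : sconstraint lpvar := (map (fun y => (-1, VG x y)) T, - u x).
Definition marg'_le y : sconstraint lpvar := (map (fun x => (1, VH x y)) S, v y).
Definition marg'_ge y : sconstraint lpvar := (map (fun x => (-1, VH x y)) S, - v y).
Definition cost_le : sconstraint lpvar :=
  (flat_map (fun x => flat_map (fun y => map (fun k => (1, VS x y k)) K) T) S, D).

Definition lp_pair_block x y : list (sconstraint lpvar) :=
  [gam_nonneg x y; gam'_nonneg x y] ++ map (slack_pos x y) K ++ map (slack_neg x y) K.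

Definition lp_system : list (sconstraint lpvar) :=
  flat_map (fun x => flat_map (lp_pair_block x) T) S
  ++ flat_map (fun x => [marg_le x; marg_ge x]) S
  ++ flat_map (fun y => [marg'_le y; marg'_ge y]) T ++ [cost_le].

Lemma lsum_lp_system h : lsum lp_system h =
  lsum S (fun x => lsum T (fun y => h (gam_nonneg x y) + h (gam'_nonneg x y) +
     (lsum K (fun k => h (slack_pos x y k)) + lsum K (fun k => h (slack_neg x y k)))))
  + lsum S (fun x => h (marg_le x) + h (marg_ge x))
  + lsum T (fun y => h (marg'_le y) + h (marg'_ge y)) + h cost_le.
Proof.
  unfold lp_system. rewrite !lsum_app, !lsum_flat_map, lsum_cons, lsum_nil, Rplus_0_r.
  rewrite !Rplus_assoc. f_equal; [|f_equal; [|f_equal]];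
    apply lsum_ext; intros; rewrite ?lsum_flat_map; try (apply lsum_ext; intros);
    unfold lp_pair_block; rewrite ?lsum_app, ?lsum_map, ?lsum_cons, ?lsum_nil; ring.
Qed.

Lemma in_lp_pair x y c : In x S -> In y T -> In c (lp_pair_block x y) -> In c lp_system.
Proof.
  intros Hx Hy Hc. apply in_or_app; left. apply in_flat_map. exists x; split; auto.
  apply in_flat_map; eauto.
Qed.

Lemma in_lp_marg x c : In x S -> In c [marg_le x; marg_ge x] -> In c lp_system.
Proof. intros Hx Hc. apply in_or_app; right; apply in_or_app; left. apply in_flat_map; eauto. Qed.

Lemma in_lp_marg' y c : In y T -> In c [marg'_le y; marg'_ge y] -> In c lp_system.
Proof.
  intros Hy Hc. do 2 (apply in_or_app; right). apply in_or_app; left. apply in_flat_map; eauto.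
Qed.

Lemma in_lp_cost : In cost_le lp_system.
Proof. do 3 (apply in_or_app; right). left; auto. Qed.

Ltac in_lp_system :=
  first [ apply in_lp_cost
        | eapply in_lp_marg; [eassumption|]; simpl; tauto
        | eapply in_lp_marg'; [eassumption|]; simpl; tauto
        | eapply in_lp_pair; [eassumption | eassumption |];
          unfold lp_pair_block; simpl; rewrite ?in_app_iff; intuition (auto using in_map) ].

Lemma lp_system_in_vars c : In c lp_system -> form_in lp_vars (fst c).
Proof.
  unfold lp_system. intros Hc [a w] Hp; simpl.
  repeat rewrite in_app_iff in Hc.
  destruct Hc as [Hc|[Hc|[Hc|[<-|[]]]]].
  - apply in_flat_map in Hc as [x [Hx Hc]]. apply in_flat_map in Hc as [y [Hy Hc]].
    apply (in_lp_vars x y); auto. unfold lp_pair_block in Hc. simpl in Hc.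
    rewrite in_app_iff, !in_map_iff in Hc.
    destruct Hc as [<-|[<-|[[k [<- Hk]]|[k [<- Hk]]]]]; simpl in Hp;
      repeat destruct Hp as [Hp|Hp]; try injection Hp as <- <-; try contradiction;
      unfold lp_block; simpl; auto using in_map.
  - apply in_flat_map in Hc as [x [Hx [<-|[<-|[]]]]]; simpl in Hp;
      apply in_map_iff in Hp as [y [Hp Hy]]; injection Hp as <- <-;
      apply (in_lp_vars x y); simpl; auto.
  - apply in_flat_map in Hc as [y [Hy [<-|[<-|[]]]]]; simpl in Hp;
      apply in_map_iff in Hp as [x [Hp Hx]]; injection Hp as <- <-;
      apply (in_lp_vars x y); simpl; auto.
  - simpl in Hp. apply in_flat_map in Hp as [x [Hx Hp]]. apply in_flat_map in Hp as [y [Hy Hp]].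
    apply in_map_iff in Hp as [k [Hp Hk]]. injection Hp as <- <-.
    apply (in_lp_vars x y); auto. right; right; apply in_map; auto.
Qed.

Lemma lp_ineq X c : feasible lp_vars (map dense lp_system) X -> In c lp_system ->
  eval_form (fst c) X <= snd c.
Proof.
  intros F Hc. rewrite <- (dense_lhs lp_vars) by (apply lp_vars_nodup || apply lp_system_in_vars; auto).
  apply (F (dense c)), in_map; auto.
Qed.

Lemma coupling_of_feasible X : feasible lp_vars (map dense lp_system) X ->
  coupling n S T u v D (fun x y => X (VG x y)) (fun x y => X (VH x y)).
Proof.
  intros F. unfold coupling, eval_form in *.
  split; [|split; [|split]].
  - intros x y Hx Hy. split.
    + assert (H := lp_ineq X (gam_nonneg x y) F ltac:(in_lp_system)). simpl in H. lra.
    + assert (H := lp_ineq X (gam'_nonneg x y) F ltac:(in_lp_system)). simpl in H. lra.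
  - intros x Hx.
    assert (H1 := lp_ineq X (marg_le x) F ltac:(in_lp_system)).
    assert (H2 := lp_ineq X (marg_ge x) F ltac:(in_lp_system)).
    unfold eval_form in H1, H2. simpl in H1, H2. rewrite lsum_map in H1, H2.
    rewrite (lsum_ext T _ (fun y => (-1) * X (VG x y))), lsum_scal in H2 by reflexivity.
    rewrite (lsum_ext T _ (fun y => X (VG x y))) in H1 by (intros; simpl; ring). lra.
  - intros y Hy.
    assert (H1 := lp_ineq X (marg'_le y) F ltac:(in_lp_system)).
    assert (H2 := lp_ineq X (marg'_ge y) F ltac:(in_lp_system)).
    unfold eval_form in H1, H2. simpl in H1, H2. rewrite lsum_map in H1, H2.
    rewrite (lsum_ext S _ (fun x => (-1) * X (VH x y))), lsum_scal in H2 by reflexivity.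
    rewrite (lsum_ext S _ (fun x => X (VH x y))) in H1 by (intros; simpl; ring). lra.
  - assert (H := lp_ineq X cost_le F ltac:(in_lp_system)).
    unfold eval_form in H. simpl in H. rewrite lsum_flat_map in H.
    eapply Rle_trans; [|exact H]. apply lsum_le; intros x Hx.
    rewrite lsum_flat_map. apply lsum_le; intros y Hy.
    rewrite lsum_map, norm1_lsum. apply lsum_le. intros k Hk. unfold lincomb. simpl.
    assert (Hp := lp_ineq X (slack_pos x y k) F ltac:(in_lp_system)).
    assert (Hm := lp_ineq X (slack_neg x y k) F ltac:(in_lp_system)).
    unfold eval_form in Hp, Hm. simpl in Hp, Hm.
    apply Rabs_le. split; lra.
Qed.

Section Evaluations.

Variable X : lpvar -> R.

Lemma eval_gam_nonneg x y : eval_form (fst (gam_nonneg x y)) X = - X (VG x y).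
Proof. unfold eval_form; cbn [fst snd gam_nonneg]. rewrite lsum_cons, lsum_nil. simpl. ring. Qed.

Lemma eval_gam'_nonneg x y : eval_form (fst (gam'_nonneg x y)) X = - X (VH x y).
Proof. unfold eval_form; cbn [fst snd gam'_nonneg]. rewrite lsum_cons, lsum_nil. simpl. ring. Qed.

Lemma eval_slack_pos x y k :
  eval_form (fst (slack_pos x y k)) X = X (VG x y) * x k - X (VH x y) * y k - X (VS x y k).
Proof. unfold eval_form; cbn [fst snd slack_pos]. rewrite !lsum_cons, lsum_nil. simpl. ring. Qed.

Lemma eval_slack_neg x y k :
  eval_form (fst (slack_neg x y k)) X = - X (VG x y) * x k + X (VH x y) * y k - X (VS x y k).
Proof. unfold eval_form; cbn [fst snd slack_neg]. rewrite !lsum_cons, lsum_nil. simpl. ring. Qed.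

Lemma eval_marg x : eval_form (fst (marg_le x)) X = lsum T (fun y => X (VG x y)) /\
                    eval_form (fst (marg_ge x)) X = - lsum T (fun y => X (VG x y)).
Proof.
  unfold eval_form; cbn [fst snd marg_le marg_ge]. rewrite !lsum_map, <- lsum_opp.
  split; apply lsum_ext; intros; simpl; ring.
Qed.

Lemma eval_marg' y : eval_form (fst (marg'_le y)) X = lsum S (fun x => X (VH x y)) /\
                     eval_form (fst (marg'_ge y)) X = - lsum S (fun x => X (VH x y)).
Proof.
  unfold eval_form; cbn [fst snd marg'_le marg'_ge]. rewrite !lsum_map, <- lsum_opp.
  split; apply lsum_ext; intros; simpl; ring.
Qed.

Lemma eval_cost : eval_form (fst cost_le) X =
  lsum S (fun x => lsum T (fun y => lsum K (fun k => X (VS x y k)))).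
Proof.
  unfold eval_form; cbn [fst snd cost_le]. rewrite lsum_flat_map. apply lsum_ext; intros x _.
  rewrite lsum_flat_map. apply lsum_ext; intros y _. rewrite lsum_map. apply lsum_ext; intros.
  simpl; ring.
Qed.

End Evaluations.

(* The coefficients of gamma(x,z), gamma'(x,z) and slack(x,z,k) in a
   combination of the constraints with weights yw. *)
Definition coefG (yw : sconstraint lpvar -> R) x z : R :=
  - yw (gam_nonneg x z) + (yw (marg_le x) - yw (marg_ge x))
  + lsum K (fun k => (yw (slack_pos x z k) - yw (slack_neg x z k)) * x k).
Definition coefH (yw : sconstraint lpvar -> R) x z : R :=
  - yw (gam'_nonneg x z) + (yw (marg'_le z) - yw (marg'_ge z))
  - lsum K (fun k => (yw (slack_pos x z k) - yw (slack_neg x z k)) * z k).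
Definition coefS (yw : sconstraint lpvar -> R) x z k : R :=
  - yw (slack_pos x z k) - yw (slack_neg x z k) + yw cost_le.

Lemma lp_lagrangian (yw : sconstraint lpvar -> R) X :
  lsum lp_system (fun c => yw c * eval_form (fst c) X) =
  lsum S (fun x => lsum T (fun z => X (VG x z) * coefG yw x z +
     (X (VH x z) * coefH yw x z + lsum K (fun k => X (VS x z k) * coefS yw x z k)))).
Proof.
  rewrite lsum_lp_system, eval_cost.
  rewrite (lsum_ext S (fun x => yw (marg_le x) * _ + yw (marg_ge x) * _)
     (fun x => lsum T (fun z => (yw (marg_le x) - yw (marg_ge x)) * X (VG x z)))).
  2:{ intros x _. destruct (eval_marg X x) as [-> ->]. rewrite lsum_scal. ring. }
  rewrite (lsum_ext T (fun z => yw (marg'_le z) * _ + yw (marg'_ge z) * _)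
     (fun z => lsum S (fun x => (yw (marg'_le z) - yw (marg'_ge z)) * X (VH x z)))).
  2:{ intros z _. destruct (eval_marg' X z) as [-> ->]. rewrite lsum_scal. ring. }
  rewrite (lsum_swap T S), <- (lsum_scal S (yw cost_le)), <- !lsum_plus.
  apply lsum_ext. intros x _. rewrite <- lsum_scal, <- !lsum_plus. apply lsum_ext. intros z _.
  rewrite eval_gam_nonneg, eval_gam'_nonneg.
  rewrite (lsum_ext K (fun k => yw (slack_pos x z k) * _)
     (fun k => yw (slack_pos x z k) * (X (VG x z) * x k - X (VH x z) * z k - X (VS x z k))))
    by (intros; rewrite eval_slack_pos; auto).
  rewrite (lsum_ext K (fun k => yw (slack_neg x z k) * _)
     (fun k => yw (slack_neg x z k) * (- X (VG x z) * x k + X (VH x z) * z k - X (VS x z k))))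
    by (intros; rewrite eval_slack_neg; auto).
  rewrite <- (lsum_scal K (yw cost_le)).
  unfold coefG, coefH, coefS.
  set (xg := X (VG x z)). set (xh := X (VH x z)).
  assert (Hk : lsum K (fun k => yw (slack_pos x z k) * (xg * x k - xh * z k - X (VS x z k))) +
     lsum K (fun k => yw (slack_neg x z k) * (- xg * x k + xh * z k - X (VS x z k))) +
     lsum K (fun k => yw cost_le * X (VS x z k)) =
     xg * lsum K (fun k => (yw (slack_pos x z k) - yw (slack_neg x z k)) * x k)
     - xh * lsum K (fun k => (yw (slack_pos x z k) - yw (slack_neg x z k)) * z k)
     + lsum K (fun k => X (VS x z k) *
         (- yw (slack_pos x z k) - yw (slack_neg x z k) + yw cost_le))).
  { rewrite <- !lsum_scal, <- !lsum_plus, <- lsum_minus, <- lsum_plus.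
    apply lsum_ext; intros; ring. }
  lra.
Qed.

Lemma lp_rhs (yw : sconstraint lpvar -> R) : lsum lp_system (fun c => yw c * snd c) =
  lsum S (fun x => (yw (marg_le x) - yw (marg_ge x)) * u x) +
  lsum T (fun z => (yw (marg'_le z) - yw (marg'_ge z)) * v z) + yw cost_le * D.
Proof.
  rewrite lsum_lp_system. cbn [snd gam_nonneg gam'_nonneg slack_pos slack_neg marg_le marg_ge
                                marg'_le marg'_ge cost_le].
  rewrite (lsum_zero S (fun x => lsum T _)).
  2:{ intros x _. apply lsum_zero. intros z _. rewrite !lsum_zero by (intros; ring). ring. }
  rewrite (lsum_ext S _ (fun x => (yw (marg_le x) - yw (marg_ge x)) * u x)) by (intros; ring).
  rewrite (lsum_ext T _ (fun z => (yw (marg'_le z) - yw (marg'_ge z)) * v z)) by (intros; ring).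
  ring.
Qed.

Lemma lsum_ind2 (F : point -> point -> R) x0 z0 : In x0 S -> In z0 T ->
  lsum S (fun x => lsum T (fun z => ind (x = x0) * ind (z = z0) * F x z)) = F x0 z0.
Proof.
  intros Hx Hz.
  rewrite (lsum_ext S _ (fun x => ind (x = x0) * lsum T (fun z => ind (z = z0) * F x z)))
    by (intros; rewrite <- lsum_scal; apply lsum_ext; intros; ring).
  rewrite lsum_ind by auto. apply lsum_ind; auto.
Qed.

(* A certificate makes every coefficient of the combined constraint vanish:
   test the Lagrangian identity against the indicator of each variable. *)
Lemma certificate_coefficients y : certificate lp_vars (map dense lp_system) y ->
  forall x0 z0, In x0 S -> In z0 T ->
    coefG (fun c => y (dense c)) x0 z0 = 0 /\ coefH (fun c => y (dense c)) x0 z0 = 0 /\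
    forall k0, In k0 K -> coefS (fun c => y (dense c)) x0 z0 k0 = 0.
Proof.
  intros [_ [Hy2 _]] x0 z0 Hx0 Hz0. set (yw := fun c => y (dense c)).
  assert (Lag0 : forall X, lsum lp_system (fun c => yw c * eval_form (fst c) X) = 0).
  { intros X.
    rewrite (lsum_ext lp_system _ (fun c => lsum lp_vars (fun w => yw c * fst (dense c) w * X w))).
    2:{ intros c Hc. rewrite <- (dense_lhs lp_vars) by (apply lp_vars_nodup || apply lp_system_in_vars; auto).
        rewrite <- lsum_scal. apply lsum_ext; intros; ring. }
    rewrite lsum_swap. apply lsum_zero. intros w Hw.
    rewrite lsum_scal_r. unfold yw. rewrite <- (lsum_map dense lp_system (fun c => y c * fst c w)).
    rewrite Hy2 by auto. ring. }
  split; [|split].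
  - specialize (Lag0 (fun w => match w with VG a b => ind (a = x0) * ind (b = z0) | _ => 0 end)).
    rewrite lp_lagrangian in Lag0. rewrite <- Lag0, <- (lsum_ind2 (coefG yw)) by auto.
    apply lsum_ext; intros; apply lsum_ext; intros. rewrite lsum_zero by (intros; ring). ring.
  - specialize (Lag0 (fun w => match w with VH a b => ind (a = x0) * ind (b = z0) | _ => 0 end)).
    rewrite lp_lagrangian in Lag0. rewrite <- Lag0, <- (lsum_ind2 (coefH yw)) by auto.
    apply lsum_ext; intros; apply lsum_ext; intros. rewrite lsum_zero by (intros; ring). ring.
  - intros k0 Hk0.
    specialize (Lag0 (fun w => match w with
                               | VS a b k => ind (a = x0) * ind (b = z0) * ind (k = k0) | _ => 0 end)).
    rewrite lp_lagrangian in Lag0.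
    rewrite <- Lag0, <- (lsum_ind2 (fun x z => coefS yw x z k0)) by auto.
    apply lsum_ext; intros x _; apply lsum_ext; intros z _.
    rewrite <- (lsum_ind K k0 (fun k => ind (x = x0) * ind (z = z0) * coefS yw x z k))
      by (apply seq_NoDup || auto).
    transitivity (lsum K (fun k => ind (x = x0) * ind (z = z0) * ind (k = k0) * coefS yw x z k));
      [apply lsum_ext; intros; ring | ring].
Qed.

Lemma certificate_dual_solution y : certificate lp_vars (map dense lp_system) y ->
  exists (a b : point -> R) (lam : R) (d : point -> point -> nat -> R),
    0 <= lam /\
    (forall x z k, In x S -> In z T -> In k K -> Rabs (d x z k) <= lam) /\
    (forall x z, In x S -> In z T -> a x <= lsum K (fun k => d x z k * x k)) /\
    (forall x z, In x S -> In z T -> lsum K (fun k => d x z k * z k) <= b z) /\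
    lam * D < lsum S (fun x => a x * u x) - lsum T (fun z => b z * v z).
Proof.
  intros Hcert. pose proof (certificate_coefficients y Hcert) as Hcoef.
  destruct Hcert as [Hy1 [_ Hy3]]. set (yw := fun c => y (dense c)) in *.
  assert (Hpos : forall c, In c lp_system -> 0 <= yw c) by (intros; apply Hy1, in_map; auto).
  rewrite lsum_map in Hy3. change (lsum lp_system (fun c => yw c * snd c) < 0) in Hy3.
  rewrite lp_rhs in Hy3.
  exists (fun x => - (yw (marg_le x) - yw (marg_ge x))),
         (fun z => yw (marg'_le z) - yw (marg'_ge z)), (yw cost_le),
         (fun x z k => yw (slack_pos x z k) - yw (slack_neg x z k)).
  split; [|split; [|split; [|split]]].
  - apply Hpos, in_lp_cost.
  - intros x z k Hx Hz Hk. destruct (Hcoef x z Hx Hz) as [_ [_ HS0]].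
    specialize (HS0 k Hk). unfold coefS in HS0.
    pose proof (Hpos (slack_pos x z k) ltac:(in_lp_system)).
    pose proof (Hpos (slack_neg x z k) ltac:(in_lp_system)).
    apply Rabs_le. lra.
  - intros x z Hx Hz. destruct (Hcoef x z Hx Hz) as [HG _]. unfold coefG in HG.
    pose proof (Hpos (gam_nonneg x z) ltac:(in_lp_system)). lra.
  - intros x z Hx Hz. destruct (Hcoef x z Hx Hz) as [_ [HH _]]. unfold coefH in HH.
    pose proof (Hpos (gam'_nonneg x z) ltac:(in_lp_system)). lra.
  - rewrite (lsum_ext S _ (fun x => - ((yw (marg_le x) - yw (marg_ge x)) * u x))), lsum_opp
      by (intros; ring).
    lra.
Qed.

End TransportLP.

(* Otherwise Farkas'
   lemma yields a dual solution beating weak duality. *)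
Lemma coupling_exists n (X : point -> Prop) (u v : point -> R) S T :
  (forall x, X x -> simplex n x) -> distf X u -> distf X v ->
  NoDup S -> (forall x, In x S <-> u x <> 0) -> NoDup T -> (forall z, In z T <-> v z <> 0) ->
  exists gam gam', coupling n S T u v (dstar n u v) gam gam'.
Proof.
  intros HX Hu Hv HS HSe HT HTe.
  set (L := map dense (lp_system n S T u v (dstar n u v))).
  destruct (classic (exists x, feasible (lp_vars n S T) L x)) as [[x Hx]|Hinf].
  - exists (fun a b => x (VG a b)), (fun a b => x (VH a b)). apply coupling_of_feasible; auto.
  - destruct (farkas _ (lp_vars n S T) (lp_vars_nodup n S T HS HT) L Hinf) as [y Hy].
    destruct (certificate_dual_solution n S T u v _ HS HT y Hy)
      as [a [b [lam [d [Hlam [Hd [Ha [Hb Hgap]]]]]]]].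
    pose proof (weak_duality n X u v S T a b lam d HX Hu Hv HS HSe HT HTe Hlam Hd Ha Hb).
    lra.
Qed.

(** Part 2: Fhat is non expansive. *)

Section Transport.

Variables (n : nat) (X : point -> Prop) (A : Type).
Variables (u v : point -> R) (S T : list point) (D : R) (gam gam' : point -> point -> R).
Variable sigma : point -> A -> R.

Hypotheses (Hu : distf X u) (Hv : distf X v).
Hypotheses (HSe : forall x, In x S <-> u x <> 0) (HTe : forall y, In y T <-> v y <> 0).
Hypothesis Hsigma : policy X sigma.
Hypothesis Hcoupling : coupling n S T u v D gam gam'.

Lemma support_in_X x : In x S -> X x.
Proof. intros Hx. apply Hu, HSe, Hx. Qed.

(* The policy at y plays the sigma(x), x in S, in proportion to the mass
   gamma'(x, y) transported from x to y. *)
Definition transported_policy (y : point) : A -> R :=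
  if Req_dec_T (v y) 0 then sigma y
  else fun a => lsum S (fun x => gam' x y / v y * sigma x a).

Lemma transported_policy_sum y : In y T ->
  finsupp (transported_policy y) /\
  forall h, v y * fsum (transported_policy y) h = lsum S (fun x => gam' x y * fsum (sigma x) h).
Proof.
  intros Hy. assert (Hvy : v y <> 0) by (apply HTe; auto).
  unfold transported_policy. destruct (Req_dec_T (v y) 0) as [|_]; [contradiction|].
  destruct (fsum_comb S (fun x => gam' x y / v y) sigma
      (fun a => lsum S (fun x => gam' x y / v y * sigma x a))) as [Hfin Hsum].
  - intros x Hx. apply (Hsigma x (support_in_X x Hx)).
  - reflexivity.
  - split; auto. intros h. rewrite Hsum, <- lsum_scal. apply lsum_ext. intros x _. field; auto.
Qed.

Lemma transported_policy_ok : policy X transported_policy.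
Proof.
  intros y Hy. destruct (Req_dec_T (v y) 0) as [E|E].
  { unfold transported_policy. destruct (Req_dec_T (v y) 0); [auto | contradiction]. }
  assert (HyT : In y T) by (apply HTe; auto).
  destruct (transported_policy_sum y HyT) as [Hfin Hsum].
  destruct Hcoupling as [Hg [_ [Hm2 _]]].
  assert (Hvy : 0 < v y) by (destruct Hv as [Hvp _]; specialize (Hvp y); lra).
  split; [|split; [auto | split; [auto|]]].
  - intros a. unfold transported_policy. destruct (Req_dec_T (v y) 0); [contradiction|].
    apply lsum_nonneg. intros x Hx. destruct (Hsigma x (support_in_X x Hx)) as [Hp _].
    apply Rmult_le_pos; [|apply Hp]. unfold Rdiv.
    apply Rmult_le_pos; [apply (Hg x y Hx HyT) | left; apply Rinv_0_lt_compat; auto].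
  - apply Rmult_eq_reg_l with (v y); auto. rewrite Hsum, Rmult_1_r, <- (Hm2 y HyT).
    apply lsum_ext. intros x Hx. destruct (Hsigma x (support_in_X x Hx)) as [_ [_ [_ H1]]].
    rewrite H1; ring.
Qed.

(* Both sums are split along
   the coupling and compared pair by pair. *)
Lemma transport_bound (r : point -> A -> R) :
  (forall x y a al be, X x -> X y -> 0 <= al -> 0 <= be ->
     Rabs (al * r x a - be * r y a) <= norm1 n (lincomb al x be y)) ->
  Rabs (lsum S (fun x => u x * fsum (sigma x) (r x)) -
        lsum T (fun y => v y * fsum (transported_policy y) (r y))) <= D.
Proof.
  intros Hr. destruct Hcoupling as [Hg [Hm1 [_ Hcost]]].
  rewrite (lsum_ext S _ (fun x => lsum T (fun y => gam x y * fsum (sigma x) (r x))))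
    by (intros x Hx; rewrite <- Hm1, lsum_scal_r by auto; reflexivity).
  rewrite (lsum_ext T _ (fun y => lsum S (fun x => gam' x y * fsum (sigma x) (r y))))
    by (intros y Hy; apply transported_policy_sum; auto).
  rewrite <- (lsum_swap S T), <- lsum_minus.
  eapply Rle_trans; [apply lsum_abs|]. eapply Rle_trans; [|exact Hcost].
  apply lsum_le. intros x Hx. rewrite <- lsum_minus.
  eapply Rle_trans; [apply lsum_abs|]. apply lsum_le. intros y Hy.
  assert (HyT : X y) by (apply Hv, HTe; auto).
  destruct (Hsigma x (support_in_X x Hx)) as [Hp [_ [Hs H1]]].
  destruct (Hg x y Hx Hy) as [G1 G2].
  replace (gam x y * fsum (sigma x) (r x) - gam' x y * fsum (sigma x) (r y))
    with (fsum (sigma x) (fun a => gam x y * r x a + (- gam' x y) * r y a))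
    by (rewrite fsum_hlin; auto; ring).
  eapply Rle_trans; [apply fsum_abs; auto|].
  rewrite <- (Rmult_1_r (norm1 _ _)), <- H1, <- fsum_const by auto.
  apply fsum_le; auto. intros a _.
  replace (gam x y * r x a + - gam' x y * r y a) with (gam x y * r x a - gam' x y * r y a) by ring.
  apply Hr; auto. apply support_in_X; auto.
Qed.

End Transport.

Arguments transported_policy {A} v S gam' sigma y.

Lemma fsum_Fimage_state {A} (q : point -> A -> point -> R) g (u : point -> R) S
  (sigma : point -> A -> R) f :
  NoDup S -> (forall x, u x <> 0 -> In x S) ->
  (forall x, In x S -> finsupp (sigma x)) -> (forall x a, In x S -> finsupp (q x a)) ->
  fsum (fst (Fimage q g u sigma)) f = lsum S (fun x => u x * fsum (sigma x) (fun a => fsum (q x a) f)).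
Proof.
  intros HS HSu Hsig Hq.
  assert (Inner : forall x, In x S -> finsupp (qext q x (sigma x)) /\
     forall f, fsum (qext q x (sigma x)) f = fsum (sigma x) (fun a => fsum (q x a) f)).
  { intros x Hx. destruct (Hsig x Hx) as [s [Hs1 Hs2]].
    destruct (fsum_comb s (sigma x) (fun a => q x a) (qext q x (sigma x))) as [E F].
    - intros a _. apply Hq; auto.
    - intros x'. unfold qext. apply fsum_eq_lsum; auto.
    - split; auto. intros f0. rewrite F. symmetry. apply fsum_eq_lsum; auto. }
  destruct (fsum_comb S u (fun x => qext q x (sigma x)) (fst (Fimage q g u sigma))) as [_ F].
  - intros x Hx. apply Inner; auto.
  - intros x'. apply fsum_eq_lsum; auto.
  - rewrite F. apply lsum_ext. intros x Hx. f_equal. apply Inner; auto.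
Qed.

(* Statement 2 of the theorem: answer the policy sigma at z by the policy
   transported along a coupling of cost at most d_*; both components of the
   images are then within d_* by the transport inequality. *)
Lemma Fhat_nonexpansive n (X : point -> Prop) (A : Type)
  (q : point -> A -> point -> R) (g : point -> A -> R) :
  (forall x, X x -> simplex n x) ->
  (forall x a, X x -> distf X (q x a)) ->
  (forall x y a f alpha beta, X x -> X y -> D1 n f -> 0 <= alpha -> 0 <= beta ->
     Rabs (alpha * fsum (q x a) f - beta * fsum (q y a) f) <= norm1 n (lincomb alpha x beta y)) ->
  (forall x y a alpha beta, X x -> X y -> 0 <= alpha -> 0 <= beta ->
     Rabs (alpha * g x a - beta * g y a) <= norm1 n (lincomb alpha x beta y)) ->
  forall z z', inZ X z -> inZ X z' ->
    forall w, Fhat X q g z w -> exists w', Fhat X q g z' w' /\ dZ n w w' <= dZ n z z'.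
Proof.
  intros HXsub Hq Hqlip Hglip z z' [Hu _] [Hv _] w Hw.
  rewrite Fhat_Fimage in Hw. destruct Hw as [sigma [Hsig ->]].
  set (u := fst z) in *. set (v := fst z') in *.
  destruct (supp_exact u) as [S [HS HSe]]; [apply Hu|].
  destruct (supp_exact v) as [T [HT HTe]]; [apply Hv|].
  destruct (coupling_exists n X u v S T HXsub Hu Hv HS HSe HT HTe) as [gam [gam' Hc]].
  set (sigma' := transported_policy v S gam' sigma).
  assert (HSX : forall x, In x S -> X x) by (intros; apply Hu, HSe; auto).
  assert (HTX : forall y, In y T -> X y) by (intros; apply Hv, HTe; auto).
  exists (Fimage q g v sigma'). split.
  { apply Fhat_Fimage. exists sigma'. split; [|reflexivity].
    apply (transported_policy_ok n X A u v S T (dstar n u v) gam gam'); auto. }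
  unfold dZ. apply Rle_trans with (dstar n u v); [|apply Rmax_l].
  assert (Hbound := transport_bound n X A u v S T _ gam gam' sigma Hu Hv HSe HTe Hsig Hc).
  assert (HsigS : forall x, In x S -> finsupp (sigma x)) by (intros; apply Hsig, HSX; auto).
  assert (HsigT : forall y, In y T -> finsupp (sigma' y))
    by (intros y Hy; apply (transported_policy_sum X A u v S T gam' sigma Hu HSe HTe Hsig y Hy)).
  assert (HqS : forall x a, In x S -> finsupp (q x a)) by (intros; apply Hq, HSX; auto).
  assert (HqT : forall y a, In y T -> finsupp (q y a)) by (intros; apply Hq, HTX; auto).
  apply Rmax_lub.
  - apply dstar_le; [apply dstar_nonneg; [apply Hu | apply Hv]|]. intros f Hf.
    rewrite (fsum_Fimage_state q g u S sigma f), (fsum_Fimage_state q g v T sigma' f)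
      by (auto; intros; apply HSe || apply HTe; auto).
    eapply Rle_trans; [apply Rle_abs|]. apply Hbound. intros; apply Hqlip; auto.
  - simpl. unfold gext.
    rewrite (fsum_eq_lsum u S), (fsum_eq_lsum v T) by (auto; intros; apply HSe || apply HTe; auto).
    apply Hbound. auto.
Qed.

Theorem mainTheorem16 (n : nat) (X : point -> Prop) (A : Type)
  (q : point -> A -> point -> R) (g : point -> A -> R)
  (HXsub : forall x, X x -> simplex n x)
  (HXcpt : compact1 n X)
  (Hq : forall x a, X x -> distf X (q x a))
  (Hg : forall x a, X x -> 0 <= g x a <= 1)
  (Hqlip : forall x y a f alpha beta, X x -> X y -> D1 n f ->
     0 <= alpha -> 0 <= beta ->
     Rabs (alpha * fsum (q x a) f - beta * fsum (q y a) f)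
       <= norm1 n (lincomb alpha x beta y))
  (Hglip : forall x y a alpha beta, X x -> X y ->
     0 <= alpha -> 0 <= beta ->
     Rabs (alpha * g x a - beta * g y a) <= norm1 n (lincomb alpha x beta y)) :
  (forall z z' l, inZ X z -> inZ X z' -> 0 <= l <= 1 ->
     forall w, Fhat X q g (combZ l z z') w <->
       exists w1 w2, Fhat X q g z w1 /\ Fhat X q g z' w2 /\ w = combZ l w1 w2)
  /\
  (forall z z', inZ X z -> inZ X z' ->
     forall w, Fhat X q g z w ->
       exists w', Fhat X q g z' w' /\ dZ n w w' <= dZ n z z').
Proof.
  split.
  - apply Fhat_affine.
  - apply Fhat_nonexpansive; assumption.
Qed.
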